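(* Let $n\ge 2$. Let $\hat a_{i,i-1}>0$ and $\hat b_{i,i-1}\in\mathbb{R}$ for $2\le i\le n$, and for $1\le m\le k\le n$ put $\hat a_{k,m}:=\prod_{i=m+1}^{k}\hat a_{i,i-1}$ (so $\hat a_{k,k}=1$). Let $L_i\in\mathbb{R}$ ($2\le i\le n$) and $R_i\in\mathbb{R}$ ($1\le i\le n-1$) satisfy $L_i=\hat a_{i,i-1}R_{i-1}+\hat b_{i,i-1}$ for $2\le i\le n$, and $L_i\le R_i$ for $2\le i\le n-1$. Suppose $\hat a_{j,1}=\prod_{i=2}^{j}\hat a_{i,i-1}\ge 1$ for all $2\le j\le n$. Then $$\sum_{i=2}^{n}\bigl(L_i-R_{i-1}\bigr)\le \frac{\hat a_{n,1}-1}{\hat a_{n,1}}\,L_n+\sum_{i=2}^{n}\frac{\hat b_{i,i-1}}{\hat a_{i,1}}.$$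
   Context: Setting: a timing packet traverses a chain of nodes $1,2,\ldots,n$. Node $i$ ($2\le i\le n$) records a receive time-stamp $L_i=\tau^{i,l}(t_{i,l})$ and node $i$ ($1\le i\le n-1$) a send time-stamp $R_i=\tau^{i,r}(t_{i,r})$, where the ''left'' and ''right'' clocks of intermediate nodes are arbitrary functions. The numbers $\hat a_{i,i-1},\hat b_{i,i-1}$ are the declared relative skews and offsets between adjacent nodes; the relation $L_i=\hat a_{i,i-1}R_{i-1}+\hat b_{i,i-1}$ is the skew-consistency condition, and $L_i\le R_i$ expresses causality (a node cannot forward before receiving). *)

From mathcomp Require Import all_boot all_order all_algebra.
Set Implicit Arguments. Unset Strict Implicit. Unset Printing Implicit Defensive.
Import Order.TTheory GRing.Theory Num.Theory.
Local Open Scope ring_scope.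

(* a i stands for the declared relative skew \hat a_{i,i-1} (meaningful for 2 <= i <= n).
   ahat a k m = \hat a_{k,m} = prod_{i=m+1}^{k} a i  (empty product = 1 when k = m). *)
Definition ahat (R : numDomainType) (a : nat -> R) (k m : nat) : R :=
  \prod_(m.+1 <= i < k.+1) a i.

From mathcomp Require Import all_boot all_order all_algebra.
From mathcomp Require Import ring lra zify.
Set Implicit Arguments. Unset Strict Implicit. Unset Printing Implicit Defensive.
Import Order.TTheory GRing.Theory Num.Theory.
Local Open Scope ring_scope.

(* Writing A_m := ahat a m 1, the partial sums
   S_m := sum_{i=2}^m (L_i - R_{i-1} - b_i / A_i) satisfy S_m <= (1 - 1/A_m) L_m.
   Passing from m to m+1 uses causality L_m <= R_m (the coefficient 1 - 1/A_m is
   nonnegative because A_m >= 1) and then the skew relation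
   R_m + b_{m+1}/a_{m+1} = L_{m+1}/a_{m+1}, which turns
   (1 - 1/A_m) R_m + L_{m+1} - R_m - b_{m+1}/A_{m+1} into (1 - 1/A_{m+1}) L_{m+1}. *)

Lemma ahatnn (R : numDomainType) (a : nat -> R) m : ahat a m m = 1.
Proof. by rewrite /ahat big_geq. Qed.

Lemma ahat_recr (R : numDomainType) (a : nat -> R) l m :
  (l <= m)%N -> ahat a m.+1 l = ahat a m l * a m.+1.
Proof. by move=> lm; rewrite /ahat big_nat_recr. Qed.

Lemma skew_step (R : fieldType) (x y r c : R) : x != 0 -> y != 0 ->
  (x - 1) / x * r + ((y * r + c) - r) - c / (x * y)
    = (x * y - 1) / (x * y) * (y * r + c).
Proof. by move=> x0 y0; field; rewrite y0 x0. Qed.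

Section ChainBound.

Variables (R : realFieldType) (n : nat) (a b L Rs : nat -> R).
Hypothesis a_gt0 : forall i, (2 <= i <= n)%N -> 0 < a i.
Hypothesis skew : forall i, (2 <= i <= n)%N -> L i = a i * Rs i.-1 + b i.
Hypothesis causal : forall i, (2 <= i <= n.-1)%N -> L i <= Rs i.
Hypothesis ahat_ge1 : forall j, (2 <= j <= n)%N -> 1 <= ahat a j 1.

Let A m := ahat a m 1.

Lemma A_ge1 m : (1 <= m <= n)%N -> 1 <= A m.
Proof.
case/andP=> m1 mn; have [m_gt1 | m_le1] := ltnP 1 m.
  by apply: ahat_ge1; rewrite m_gt1.
have -> : m = 1%N by lia.
by rewrite /A ahatnn.
Qed.

Lemma drift_coef_ge0 m : (1 <= m <= n)%N -> 0 <= (A m - 1) / A m.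
Proof.
move=> /A_ge1 A1; rewrite divr_ge0 ?subr_ge0 //.
exact: le_trans ler01 A1.
Qed.

Lemma drift_coef_causal m : (1 <= m < n)%N ->
  (A m - 1) / A m * L m <= (A m - 1) / A m * Rs m.
Proof.
move=> m_range; have [m_gt1 | m_le1] := ltnP 1 m.
  by rewrite ler_wpM2l ?drift_coef_ge0 ?causal //; lia.
have -> : m = 1%N by lia.
by rewrite /A ahatnn subrr !mul0r.
Qed.

Lemma partial_sum_bound m : (1 <= m <= n)%N ->
  \sum_(2 <= i < m.+1) (L i - Rs i.-1 - b i / A i) <= (A m - 1) / A m * L m.
Proof.
elim: m => [//|m IH] m_range.
have [-> | m_gt0] := posnP m; first by rewrite big_geq // /A ahatnn subrr !mul0r.
have m_lt_n : (1 <= m < n)%N by lia.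
have Am_gt0 : 0 < A m by apply: (lt_le_trans ltr01); apply: A_ge1; lia.
have am_gt0 : 0 < a m.+1 by apply: a_gt0; lia.
rewrite big_nat_recr //= /A ahat_recr // skew /=; last by lia.
have := skew_step (Rs m) (b m.+1) (lt0r_neq0 Am_gt0) (lt0r_neq0 am_gt0).
have := IH ltac:(lia); have := drift_coef_causal m_lt_n.
rewrite /A; lra.
Qed.

End ChainBound.

Theorem lemma1 (R : realFieldType) (n : nat) (a b L Rs : nat -> R) :
  (2 <= n)%N ->
  (forall i, (2 <= i <= n)%N -> 0 < a i) ->
  (forall i, (2 <= i <= n)%N -> L i = a i * Rs i.-1 + b i) ->
  (forall i, (2 <= i <= n.-1)%N -> L i <= Rs i) ->
  (forall j, (2 <= j <= n)%N -> 1 <= ahat a j 1) ->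
  \sum_(2 <= i < n.+1) (L i - Rs i.-1)
    <= (ahat a n 1 - 1) / ahat a n 1 * L n
       + \sum_(2 <= i < n.+1) b i / ahat a i 1.
Proof.
move=> n_ge2 a_gt0 skew causal ahat_ge1.
have := partial_sum_bound a_gt0 skew causal ahat_ge1 (m := n) ltac:(lia).
by rewrite sumrB lerBlDr addrC.
Qed.
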